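(* Let $n\ge 2$. Among all simple directed graphs with $n$ vertices and $n-1$ arcs, the maximal algebraic connectivity is $1$, and a simple directed graph with $n$ vertices and $n-1$ arcs has algebraic connectivity $1$ if and only if it is a directed tree.
   Context: A simple directed graph has no self-arcs and no repeated arcs; an arc $(j,i)$ goes from $j$ to $i$. The (in-degree) Laplacian of a directed graph $\mathbb G$ on vertices $\{1,\dots,n\}$ is $L(\mathbb G)=D-A$, where $D$ is the diagonal matrix of in-degrees and $A_{ij}=1$ if $(j,i)$ is an arc and $0$ otherwise. Its eigenvalues, counted with algebraic multiplicity, have real parts $0={\rm Re}(\lambda_1)\le {\rm Re}(\lambda_2)\le\cdots\le{\rm Re}(\lambda_n)$; the algebraic connectivity is $a(\mathbb G)={\rm Re}(\lambda_2)$, the second smallest real part. A vertex $r$ is a root if there is a directed path from $r$ to every other vertex; a graph is rooted if it has a root. An $n$-vertex directed tree is a rooted directed graph with $n$ vertices and $n-1$ arcs. *)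

From mathcomp Require Import all_boot all_order all_algebra all_field.
Set Implicit Arguments. Unset Strict Implicit. Unset Printing Implicit Defensive.
Import Order.TTheory GRing.Theory Num.Theory.
Local Open Scope ring_scope.

(* A directed graph on vertex set 'I_n is given by its arc relation
   [arc j i] meaning "there is an arc (j,i) from j to i".
   Simple = no self-arcs (irreflexive); repeated arcs are impossible
   in this representation. *)

Definition simple_digraph n (arc : rel 'I_n) : Prop := irreflexive arc.

Definition num_arcs n (arc : rel 'I_n) : nat :=
  #|[set p : 'I_n * 'I_n | arc p.1 p.2]|.

Definition indeg n (arc : rel 'I_n) (i : 'I_n) : nat :=
  #|[set j : 'I_n | arc j i]|.

Definition laplacian n (arc : rel 'I_n) : 'M[algC]_n :=
  \matrix_(i, j) ((indeg arc i)%:R *+ (i == j) - (arc j i)%:R).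

(* eigenvalues of a square matrix, listed with algebraic multiplicity:
   the roots of its characteristic polynomial (which splits over algC) *)
Definition eigenvalues n (M : 'M[algC]_n) : seq algC :=
  sval (closed_field_poly_normal (char_poly M)).

Definition sorted_re_eigs n (M : 'M[algC]_n) : seq algC :=
  sort <=%R [seq 'Re z | z <- eigenvalues M].

Definition alg_connectivity n (arc : rel 'I_n) : algC :=
  nth 0 (sorted_re_eigs (laplacian arc)) 1.

Definition is_root n (arc : rel 'I_n) (r : 'I_n) : Prop :=
  forall v, connect arc r v.

Definition rooted n (arc : rel 'I_n) : Prop := exists r, is_root arc r.

Definition directed_tree n (arc : rel 'I_n) : Prop :=
  rooted arc /\ num_arcs arc = n.-1.

(* The Laplacian L of a digraph has its eigenvalues in the Gershgorin discs
   centred at the in-degrees, so their real parts are nonnegative, and they sum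
   to tr L, the number n - 1 of arcs; hence the second smallest real part is at
   most 1.  In a directed tree every vertex but the root has exactly one
   in-neighbour, so an eigenvector for an eigenvalue other than 0 and 1 vanishes
   at the root and then along every arc: the real parts are 0s and 1s summing
   to n - 1, and the second one is 1.  A digraph without a root has two disjoint
   vertex sets closed under predecessors; the rows of L indexed by either set
   are supported on it and sum to 0, so rank L <= n - 2 and 0 is an eigenvalue
   of multiplicity at least 2, which makes the algebraic connectivity 0. *)

From mathcomp Require Import all_boot all_order all_algebra all_field zify.
Set Implicit Arguments. Unset Strict Implicit. Unset Printing Implicit Defensive.
Import Order.TTheory GRing.Theory Num.Theory.
Local Open Scope ring_scope.

Section Eigenvalues.
Variables (n : nat) (M : 'M[algC]_n).

Lemma char_poly_eigenvalues :
  char_poly M = \prod_(z <- eigenvalues M) ('X - z%:P).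
Proof.
rewrite /eigenvalues; case: closed_field_poly_normal => s /= ->.
by rewrite (monicP (char_poly_monic M)) scale1r.
Qed.

Lemma size_eigenvalues : size (eigenvalues M) = n.
Proof.
by have := size_char_poly M; rewrite char_poly_eigenvalues size_prod_XsubC => -[].
Qed.

Lemma sum_eigenvalues : (0 < n)%N -> \sum_(z <- eigenvalues M) z = \tr M.
Proof.
move=> n_gt0; apply/eqP; rewrite -eqr_opp -char_poly_trace //.
have -> : n.-1 = (size (eigenvalues M)).-1 by rewrite size_eigenvalues.
by rewrite char_poly_eigenvalues coefPn_prod_XsubC // size_eigenvalues -lt0n.
Qed.

Lemma eigenvalues_eigenvector z : z \in eigenvalues M ->
  exists2 v : 'cV_n, v != 0 & M *m v = z *: v.
Proof.
move=> z_eig; have /eigenvalueP[u uM u_neq0] : eigenvalue M^T z.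
  rewrite eigenvalue_root_char.
  have -> : char_poly M^T = char_poly M.
    rewrite /char_poly -det_tr; congr (\det _).
    by apply/matrixP => i j; rewrite !mxE eq_sym.
  by rewrite char_poly_eigenvalues root_prod_XsubC.
exists u^T; first by rewrite trmx_eq0.
by rewrite -[M]trmxK -trmx_mul uM linearZ.
Qed.

End Eigenvalues.

Section SortedReEigs.
Variables (n : nat) (M : 'M[algC]_n).

Lemma perm_sorted_re_eigs :
  perm_eq (sorted_re_eigs M) [seq 'Re z | z <- eigenvalues M].
Proof. exact/permEl/perm_sort. Qed.

Lemma size_sorted_re_eigs : size (sorted_re_eigs M) = n.
Proof. by rewrite (perm_size perm_sorted_re_eigs) size_map size_eigenvalues. Qed.

Lemma sorted_sorted_re_eigs : sorted <=%R (sorted_re_eigs M).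
Proof.
apply: (sort_sorted_in (P := Num.real)); first by move=> x y xR yR; apply: real_leVge.
by apply/allP => _ /mapP[z _ ->]; apply: Creal_Re.
Qed.

Lemma sum_sorted_re_eigs : (0 < n)%N ->
  \sum_(x <- sorted_re_eigs M) x = 'Re (\tr M).
Proof.
move=> n_gt0; rewrite (perm_big _ perm_sorted_re_eigs) big_map -raddf_sum.
by rewrite sum_eigenvalues.
Qed.

End SortedReEigs.

Lemma char_poly_conj (F : fieldType) n (P N : 'M[F]_n) : P \in unitmx ->
  char_poly (P *m N *m invmx P) = char_poly N.
Proof.
move=> P_unit; rewrite /char_poly /char_poly_mx.
have -> : 'X%:M - map_mx polyC (P *m N *m invmx P) =
    map_mx polyC P *m ('X%:M - map_mx polyC N) *m map_mx polyC (invmx P).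
  rewrite mulmxBr mulmxBl !map_mxM; congr (_ - _).
  by rewrite mul_mx_scalar -scalemxAl -map_mxM mulmxV // map_mx1 scalemx1.
by rewrite !det_mulmx mulrAC -det_mulmx -map_mxM mulmxV // map_mx1 det1 mul1r.
Qed.

(* M is conjugate to a matrix whose rows beyond [\rank M] vanish; those rows
   contribute a factor 'X each to the characteristic polynomial. *)
Lemma dvdp_char_poly_rank (F : fieldType) n (M : 'M[F]_n) :
  'X^(n - \rank M) %| char_poly M.
Proof.
set r := \rank M; pose N : 'M[F]_n := pid_mx r *m (row_ebase M *m col_ebase M).
have -> : M = col_ebase M *m N *m invmx (col_ebase M).
  by rewrite /N !mulmxA mulmxK ?col_ebase_unit // mulmx_ebase.
rewrite char_poly_conj ?col_ebase_unit //.
have N_low (i j : 'I_n) : (r <= i)%N -> N i j = 0.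
  move=> le_r_i; rewrite mxE big1 // => k _.
  by rewrite mxE ltnNge le_r_i andbF mul0r.
clearbody N; rewrite /char_poly.
pose d := \row_(i < n) (if (r <= i)%N then 'X else 1 : {poly F}).
pose K := \matrix_(i, j) (if (r <= i)%N then (i == j)%:R else char_poly_mx N i j).
have -> : char_poly_mx N = diag_mx d *m K.
  apply/matrixP => i j; rewrite mul_diag_mx !mxE.
  case: leqP => [le_r_i|_]; last by rewrite mul1r.
  by rewrite N_low // polyC0 subr0 mulr_natr.
rewrite det_mulmx det_diag dvdp_mulr //.
have le_r_n : (r <= n)%N by apply: rank_leq_row.
under eq_bigr do rewrite mxE.
rewrite -(big_mkord xpredT (fun i => if (r <= i)%N then 'X else 1)).
rewrite (big_cat_nat (leq0n r) le_r_n) /= big_nat_cond big1; last first.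
  by move=> i /andP[/andP[_ lt_i_r] _]; rewrite leqNgt lt_i_r.
rewrite mul1r (@eq_big_nat _ _ _ r n _ (fun=> 'X)) ?prodr_const_nat //.
by move=> i /andP[->].
Qed.

Lemma rank_le_count0_eigenvalues n (M : 'M[algC]_n) :
  (n - \rank M <= count_mem 0%R (eigenvalues M))%N.
Proof.
rewrite -mu_prod_XsubC -char_poly_eigenvalues.
by rewrite mup_geq ?monic_neq0 ?char_poly_monic // polyC0 subr0 dvdp_char_poly_rank.
Qed.

Lemma mxrank_le_card_rows (F : fieldType) m n (T : {set 'I_m}) (A : 'M[F]_(m, n)) :
  (forall i, i \notin T -> row i A = 0) -> (\rank A <= #|T|)%N.
Proof.
move=> A_T; apply: leq_trans (rank_leq_row (rowsub (@enum_val _ (mem T)) A)).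
apply/mxrankS/row_subP => i; case: (boolP (i \in T)) => [iT | /A_T ->]; last first.
  exact: sub0mx.
by rewrite -(enum_rankK_in iT iT) -row_rowsub row_sub.
Qed.

Section RowsOn.
Variables (F : fieldType) (m : nat).
Implicit Types (S : {set 'I_m}).

Definition rows_on n S (A : 'M[F]_(m, n)) : 'M[F]_(m, n) :=
  \matrix_(i, j) if i \in S then A i j else 0.

Lemma row_rows_on n S (A : 'M[F]_(m, n)) i : i \notin S -> row i (rows_on S A) = 0.
Proof. by move=> /negbTE iS; apply/rowP => j; rewrite !mxE iS. Qed.

Lemma mxrank_rows_on n S (A : 'M[F]_(m, n)) : (\rank (rows_on S A) <= #|S|)%N.
Proof. exact/mxrank_le_card_rows/row_rows_on. Qed.

Lemma rows_onM n p S (A : 'M[F]_(m, n)) (B : 'M[F]_(n, p)) :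
  rows_on S (A *m B) = rows_on S A *m B.
Proof.
apply/matrixP => i j; rewrite !mxE; under [RHS]eq_bigr do rewrite mxE.
by case: (i \in S) => //; rewrite big1 // => k _; rewrite mul0r.
Qed.

Lemma rows_onU n S1 S2 (A : 'M[F]_(m, n)) : [disjoint S1 & S2] ->
  rows_on (S1 :|: S2) A = rows_on S1 A + rows_on S2 A.
Proof.
move=> /disjointFr S12; apply/matrixP => i j; rewrite !mxE inE.
by case: (boolP (i \in S1)) => [/S12 -> | _]; rewrite ?addr0 ?add0r.
Qed.

Lemma rows_on_setC n S (A : 'M[F]_(m, n)) : rows_on S A + rows_on (~: S) A = A.
Proof.
by apply/matrixP => i j; rewrite !mxE inE; case: (i \in S); rewrite ?addr0 ?add0r.
Qed.

End RowsOn.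

Lemma mulmx_rows_on (F : fieldType) m n p (S : {set 'I_n})
    (A : 'M[F]_(m, n)) (B : 'M[F]_(n, p)) :
  (forall i k, k \notin S -> A i k = 0) -> A *m rows_on S B = A *m B.
Proof.
move=> A_S; apply/matrixP => i j; rewrite !mxE; apply: eq_bigr => k _.
by rewrite mxE; case: ifP => // /negbT /(A_S i) ->; rewrite !mul0r.
Qed.

Lemma connect_last_arc (T : finType) (e : rel T) x y :
  connect e x y -> x != y -> exists z, e z y.
Proof.
move=> cxy; have /connectP[[|z p] /= e_p ->] : connect [rel a b | e b a] y x.
  by rewrite connect_rev.
- by rewrite eqxx.
- by case/andP: e_p => e_zy _; exists z.
Qed.

Lemma connect_forward_mem (T : finType) (e : rel T) (a : {pred T}) x y :
  (forall u w, e u w -> u \in a -> w \in a) -> connect e x y -> x \in a -> y \in a.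
Proof.
move=> a_closed /connectP[p e_p ->]; elim: p x e_p => [|z p IHp] x //=.
by case/andP=> e_xz e_p ax; apply/IHp/(a_closed x).
Qed.

Lemma sum_nat_predC1 (T : finType) (x : T) :
  (\sum_(i : T) (i != x : nat))%N = #|T|.-1.
Proof. by rewrite -(big_mkcond (fun i => i != x) (fun=> 1%N)) sum1_card cardC1. Qed.

Lemma sumr_const_seq (V : nmodType) (T : Type) (t : seq T) (x : V) :
  \sum_(y <- t) x = x *+ size t.
Proof. by rewrite big_const_seq count_predT iter_addr_0. Qed.

Section SortedNonneg.
Variables (R : numDomainType) (s : seq R).
Hypotheses (s_sorted : sorted <=%R s) (s_ge0 : forall x, x \in s -> 0 <= x).

Lemma nth1_mulrn_le_sum : s`_1 *+ (size s).-1 <= \sum_(x <- s) x.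
Proof.
case: s s_sorted s_ge0 => [|x0 [|x1 t]] /= => [_ _ | _ ge0 | /andP[_ path_t] ge0].
- by rewrite big_nil.
- by rewrite big_seq1 ge0 ?mem_head.
have t_ge : {in t, forall y, x1 <= y} by apply/allP/(order_path_min le_trans).
rewrite !big_cons mulrS ler_wpDl ?ge0 ?mem_head // lerD2l.
rewrite -sumr_const_seq big_seq [leRHS]big_seq.
exact: ler_sum.
Qed.

Lemma nth1_eq0 : (2 <= count_mem 0%R s)%N -> s`_1 = 0.
Proof.
case: s s_sorted s_ge0 => [|x0 [|x1 t]] //= /andP[_ path_t] ge0.
apply: contraTeq => x1_neq0; rewrite -leqNgt.
have x1_gt0 : 0 < x1 by rewrite lt_def x1_neq0 ge0 // !inE eqxx orbT.
have t_ge : {in t, forall y, x1 <= y} by apply/allP/(order_path_min le_trans).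
have /count_memPn -> : 0 \notin t by apply/negP => /t_ge; rewrite lt_geF.
by rewrite (negbTE x1_neq0) addn0; case: (x0 == 0).
Qed.

Lemma nth1_eq1 : (2 <= size s)%N -> (forall x, x \in s -> x = 0 \/ x = 1) ->
  \sum_(x <- s) x = ((size s).-1)%:R -> s`_1 = 1.
Proof.
case: s s_sorted s_ge0 => [|x0 [|x1 t]] //= /andP[le01 _] ge0 _ s01.
have [x1_0 | //] : x1 = 0 \/ x1 = 1 by apply: s01; rewrite !inE eqxx orbT.
have x0_0 : x0 = 0 by apply/le_anti; rewrite -{1}x1_0 le01 ge0 ?mem_head.
have sum_t : \sum_(y <- t) y <= (size t)%:R.
  rewrite -sumr_const_seq big_seq [leRHS]big_seq; apply: ler_sum => y yt.
  have : y = 0 \/ y = 1 by apply: s01; rewrite !inE yt !orbT.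
  by case=> ->.
rewrite !big_cons x0_0 x1_0 !add0r => sum_s.
by move: sum_t; rewrite sum_s ler_nat ltnn.
Qed.

End SortedNonneg.

Lemma Re_ge0_of_norm_subr_le (z d : algC) : `|z - d| <= d -> 0 <= 'Re z.
Proof.
move=> zd; have d_ge0 : 0 <= d := le_trans (normr_ge0 _) zd.
have -> : 'Re z = 'Re (z - d) + d.
  by rewrite raddfB /= (Creal_ReP _ (ger0_real d_ge0)) subrK.
rewrite -lerBlDr sub0r; apply: real_lerNnormlW; first exact: Creal_Re.
exact: le_trans (leif_normC_Re_Creal _) zd.
Qed.

Section Laplacian.
Variables (n : nat) (arc : rel 'I_n).

Lemma indegE i : indeg arc i = #|[pred j | arc j i]|.
Proof. by rewrite /indeg cardsE. Qed.

Lemma laplacian_mulmx (v : 'cV_n) i :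
  (laplacian arc *m v) i 0 = \sum_(j | arc j i) (v i 0 - v j 0).
Proof.
rewrite mxE sumrB sumr_const -indegE -mulr_natl.
under eq_bigr do rewrite mxE mulrBl.
rewrite sumrB (bigD1 i) //= eqxx mulr1n big1 ?addr0 => [|j /negbTE]; last first.
  by rewrite eq_sym => ->; rewrite mulr0n mul0r.
congr (_ - _); rewrite [RHS]big_mkcond; apply: eq_bigr => j _.
by case: (arc j i); rewrite ?mul1r ?mul0r.
Qed.

Lemma laplacian_mul_const : laplacian arc *m const_mx 1 = 0 :> 'cV_n.
Proof.
apply/colP => i; rewrite laplacian_mulmx [RHS]mxE big1 // => j _.
by rewrite !mxE subrr.
Qed.

Lemma num_arcsE : num_arcs arc = (\sum_i indeg arc i)%N.
Proof.
rewrite /num_arcs -sum1_card big_mkcond /=.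
under eq_bigr do rewrite inE.
rewrite -(pair_bigA _ (fun j i => if arc j i then 1 else 0)%N) exchange_big /=.
apply: eq_bigr => i _; rewrite /indeg -sum1_card [RHS]big_mkcond /=.
by apply: eq_bigr => j _; rewrite inE.
Qed.

Lemma trace_laplacian : simple_digraph arc ->
  \tr (laplacian arc) = (num_arcs arc)%:R.
Proof.
move=> arc_irr; rewrite num_arcsE natr_sum; apply: eq_bigr => i _.
by rewrite mxE eqxx mulr1n arc_irr subr0.
Qed.

(* Gershgorin's disc theorem at a coordinate of maximal modulus. *)
Lemma Re_eigenvalue_laplacian_ge0 z :
  z \in eigenvalues (laplacian arc) -> 0 <= 'Re z.
Proof.
move=> /eigenvalues_eigenvector[v v_neq0 Lv].
have [i0 vi0_neq0] : exists i0, v i0 0 != 0.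
  apply/existsP; apply: contraNT v_neq0 => /existsPn v0.
  by apply/eqP/colP => i; rewrite mxE; apply/eqP/negbNE.
have [i _ v_max] := @real_arg_maxP _ _ i0 xpredT (fun i => `|v i 0|) erefl
  (fun i _ => normr_real _).
have vi_gt0 : 0 < `|v i 0|.
  by apply: lt_le_trans (v_max i0 erefl); rewrite normr_gt0.
apply: (@Re_ge0_of_norm_subr_le z (indeg arc i)%:R).
have Lvi : (z - (indeg arc i)%:R) * v i 0 = - \sum_(j | arc j i) v j 0.
  have := congr1 (fun w : 'cV_n => w i 0) Lv.
  rewrite laplacian_mulmx mxE mulrBl => <-.
  by rewrite sumrB sumr_const -indegE mulr_natl addrAC subrr add0r.
rewrite -(ler_pM2r vi_gt0) -normrM Lvi normrN.
apply: le_trans (ler_norm_sum _ _ _) _.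
rewrite indegE -sumr_const mulr_suml; apply: ler_sum => j _.
rewrite mul1r; exact: v_max.
Qed.

Definition ancestor_closed (S : {set 'I_n}) :=
  forall j i, arc j i -> i \in S -> j \in S.

Lemma laplacian_ancestor_closed S i k : ancestor_closed S ->
  i \in S -> k \notin S -> laplacian arc i k = 0.
Proof.
move=> S_closed iS kS; rewrite mxE.
have -> : (i == k) = false by apply: contraNF kS => /eqP <-.
have -> : arc k i = false by apply: contraNF kS => /S_closed; apply.
by rewrite mulr0n subr0.
Qed.

(* The rows of L indexed by S are supported on S and sum to 0: they lie in a
   space of dimension #|S| - 1. *)
Lemma mxrank_rows_on_laplacian S c : ancestor_closed S -> c \in S ->
  (\rank (rows_on S (laplacian arc)) < #|S|)%N.
Proof.
move=> S_closed cS; set X := rows_on S (laplacian arc).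
pose P : 'M[algC]_n := 1%:M - (const_mx 1 : 'cV_n) *m delta_mx 0 c.
have X_S i k : k \notin S -> X i k = 0.
  move=> kS; rewrite mxE; case: ifP => // iS.
  exact: laplacian_ancestor_closed S_closed iS kS.
have X1 : X *m (const_mx 1 : 'cV_n) = 0.
  rewrite /X -rows_onM laplacian_mul_const.
  by apply/matrixP => i j; rewrite !mxE if_same.
have -> : X = X *m rows_on S P.
  by rewrite mulmx_rows_on // mulmxBr mulmx1 mulmxA X1 mul0mx subr0.
apply: leq_ltn_trans (mxrankM_maxr _ _) _.
apply: (@leq_ltn_trans #|S :\ c|); last by rewrite (cardsD1 c S) cS.
apply: mxrank_le_card_rows => i; rewrite !inE negb_and negbK.
case/orP => [/eqP -> | iS]; last exact: row_rows_on.
by apply/rowP => j; rewrite !mxE cS big_ord1 !mxE mul1r eq_sym subrr.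
Qed.

Lemma mxrank_laplacian_disjoint_closed S1 S2 c1 c2 :
  ancestor_closed S1 -> ancestor_closed S2 -> c1 \in S1 -> c2 \in S2 ->
  [disjoint S1 & S2] -> ((\rank (laplacian arc)).+2 <= n)%N.
Proof.
move=> S1_closed S2_closed c1S1 c2S2 S12.
rewrite -(rows_on_setC (S1 :|: S2) (laplacian arc)) rows_onU //.
set A1 := rows_on S1 _; set A2 := rows_on S2 _; set A3 := rows_on _ _.
have rk1 : (\rank A1 < #|S1|)%N := mxrank_rows_on_laplacian S1_closed c1S1.
have rk2 : (\rank A2 < #|S2|)%N := mxrank_rows_on_laplacian S2_closed c2S2.
have rk3 : (\rank A3 <= #|~: (S1 :|: S2)|)%N := mxrank_rows_on _ _.
have card_n : (#|S1| + #|S2| + #|~: (S1 :|: S2)|)%N = n.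
  by rewrite -cardsUI (disjoint_setI0 S12) cards0 addn0 cardsC card_ord.
have : (\rank (A1 + A2 + A3)%R <= \rank A1 + \rank A2 + \rank A3)%N.
  exact: leq_trans (mxrank_add _ _) (leq_add (mxrank_add _ _) (leqnn _)).
lia.
Qed.

Definition ancestors v : {set 'I_n} := [set u | connect arc u v].

Lemma ancestor_closed_ancestors v : ancestor_closed (ancestors v).
Proof. by move=> j i arc_ji; rewrite !inE; apply/connect_trans/connect1. Qed.

Lemma rootedP : reflect (rooted arc) [exists r, [forall v, connect arc r v]].
Proof.
apply: (iffP existsP) => [[r /forallP r_root] | [r r_root]]; exists r => //.
exact/forallP.
Qed.

(* Pick v with the fewest ancestors: every ancestor of v is then reachable
   from v, so a vertex w unreachable from v has no ancestor in common with v. *)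
Lemma not_rooted_disjoint_ancestors (v0 : 'I_n) : ~ rooted arc ->
  exists v w, [disjoint ancestors v & ancestors w].
Proof.
move=> not_rooted.
have [v _ v_min] := @arg_minnP _ v0 xpredT (fun v => #|ancestors v|) erefl.
have v_reach u : connect arc u v -> connect arc v u.
  move=> cuv; have sub_uv : ancestors u \subset ancestors v.
    by apply/subsetP => x; rewrite !inE => /connect_trans; apply.
  have /eqP anc_uv : ancestors u == ancestors v by rewrite eqEcard sub_uv v_min.
  have : v \in ancestors u by rewrite anc_uv inE connect0.
  by rewrite inE.
have [w not_vw] : exists w, ~~ connect arc v w.
  apply/existsP; rewrite -negb_forall; apply: contra_notN not_rooted => /forallP.
  by exists v.
exists v, w; apply/pred0P => u; rewrite /= !inE.
by apply: contraNF not_vw => /andP[/v_reach cvu cuw]; apply: connect_trans cvu cuw.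
Qed.

Lemma mxrank_laplacian_not_rooted : (0 < n)%N -> ~ rooted arc ->
  ((\rank (laplacian arc)).+2 <= n)%N.
Proof.
move=> n_gt0 /(not_rooted_disjoint_ancestors (Ordinal n_gt0))[v [w vw_disj]].
apply: (mxrank_laplacian_disjoint_closed (@ancestor_closed_ancestors v)
  (@ancestor_closed_ancestors w) _ _ vw_disj); by rewrite inE.
Qed.

Lemma directed_tree_indeg r : is_root arc r -> num_arcs arc = n.-1 ->
  forall i, indeg arc i = (i != r).
Proof.
move=> r_root arcs.
have indeg_ge i : ((i != r) <= indeg arc i)%N.
  have [_ // | ir] := eqVneq i r.
  have [j arc_ji] : exists j, arc j i.
    by apply: connect_last_arc (r_root i) _; rewrite eq_sym.
  by rewrite indegE; apply/card_gt0P; exists j.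
have sum_indeg : (\sum_i indeg arc i = \sum_i (i != r : nat))%N.
  by rewrite -num_arcsE arcs sum_nat_predC1 card_ord.
have /eqP : (\sum_i (indeg arc i - (i != r)) = 0)%N.
  by rewrite sumnB // sum_indeg subnn.
rewrite sum_nat_eq0 => /forallP indeg_le i.
by apply/eqP; rewrite eqn_leq indeg_ge -subn_eq0 andbT; apply: indeg_le.
Qed.

(* The eigenvector vanishes at the root, and an arc y -> x propagates the
   value 0 from y to x because x has no other in-neighbour. *)
Lemma directed_tree_eigenvalue r z : is_root arc r -> num_arcs arc = n.-1 ->
  z \in eigenvalues (laplacian arc) -> z = 0 \/ z = 1.
Proof.
move=> r_root arcs /eigenvalues_eigenvector[v v_neq0 Lv].
have deg := directed_tree_indeg r_root arcs.
have Lv_at x : \sum_(j | arc j x) (v x 0 - v j 0) = z * v x 0.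
  by rewrite -laplacian_mulmx Lv mxE.
have [-> | z_neq0] := eqVneq z 0; first by left.
have [-> | z_neq1] := eqVneq z 1; first by right.
suff v0 : v = 0 by rewrite v0 eqxx in v_neq0.
apply/colP => x; rewrite mxE; apply/eqP.
apply: (@connect_forward_mem _ arc [pred x | v x 0 == 0] r _ _ (r_root x)) => /=.
  move=> y {}x arc_yx /eqP vy0.
  have x_neq_r : x != r.
    apply: contraTneq arc_yx => ->; apply/negP => arc_yr.
    by have := deg r; rewrite eqxx indegE => /card0_eq/(_ y); rewrite inE arc_yr.
  have /card1P[a in_a] : #|[pred j | arc j x]| == 1%N by rewrite -indegE deg x_neq_r.
  have a_y : y = a by have := in_a y; rewrite !inE arc_yx => /esym/eqP.
  have in_y : [pred j | arc j x] =1 pred1 y.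
    by move=> j; have := in_a j; rewrite !inE -a_y.
  have := Lv_at x; rewrite (big_pred1 y in_y) vy0 subr0 => /eqP.
  rewrite -subr_eq0 -{1}(mul1r (v x 0)) -mulrBl mulf_eq0 subr_eq0.
  by rewrite eq_sym (negbTE z_neq1).
have := Lv_at r; rewrite big_pred0 => [/esym/eqP | j]; last first.
  by have := deg r; rewrite eqxx indegE => /card0_eq/(_ j).
by rewrite mulf_eq0 (negbTE z_neq0).
Qed.

End Laplacian.

Section AlgebraicConnectivity.
Variables (n : nat) (arc : rel 'I_n).

Lemma sorted_re_eigs_laplacian_ge0 x :
  x \in sorted_re_eigs (laplacian arc) -> 0 <= x.
Proof.
rewrite (perm_mem (perm_sorted_re_eigs _)) => /mapP[z z_eig ->].
exact: Re_eigenvalue_laplacian_ge0 z_eig.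
Qed.

Lemma sum_sorted_re_eigs_laplacian : (0 < n)%N -> simple_digraph arc ->
  \sum_(x <- sorted_re_eigs (laplacian arc)) x = (num_arcs arc)%:R.
Proof.
move=> n_gt0 arc_irr; rewrite sum_sorted_re_eigs // trace_laplacian //.
exact/Creal_ReP/realn.
Qed.

Lemma alg_connectivity_le1 : (2 <= n)%N -> simple_digraph arc ->
  num_arcs arc = n.-1 -> alg_connectivity arc <= 1.
Proof.
move=> n_ge2 arc_irr arcs.
have := nth1_mulrn_le_sum (sorted_sorted_re_eigs _) sorted_re_eigs_laplacian_ge0.
rewrite sum_sorted_re_eigs_laplacian ?(ltnW n_ge2) // arcs size_sorted_re_eigs.
by rewrite ler_pMn2r // -ltnS prednK // ltnW.
Qed.

Lemma alg_connectivity_not_rooted : (0 < n)%N -> ~ rooted arc ->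
  alg_connectivity arc = 0.
Proof.
move=> n_gt0 not_rooted.
apply: nth1_eq0 (sorted_sorted_re_eigs _) sorted_re_eigs_laplacian_ge0 _.
rewrite (permP (perm_sorted_re_eigs _)) count_map.
apply: (@leq_trans (count_mem 0 (eigenvalues (laplacian arc)))).
  apply: leq_trans (rank_le_count0_eigenvalues _).
  by rewrite leq_subRL ?rank_leq_row // addn2 mxrank_laplacian_not_rooted.
by apply: sub_count => z /eqP /= ->; rewrite (Creal_ReP _ (rpred0 _)).
Qed.

Lemma alg_connectivity_directed_tree : (2 <= n)%N -> simple_digraph arc ->
  directed_tree arc -> alg_connectivity arc = 1.
Proof.
move=> n_ge2 arc_irr [[r r_root] arcs].
apply: nth1_eq1 (sorted_sorted_re_eigs _) sorted_re_eigs_laplacian_ge0 _ _ _.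
- by rewrite size_sorted_re_eigs.
- move=> x; rewrite (perm_mem (perm_sorted_re_eigs _)) => /mapP[z z_eig ->].
  have [-> | ->] := directed_tree_eigenvalue r_root arcs z_eig.
    by left; apply/Creal_ReP/rpred0.
  by right; apply/Creal_ReP/rpred1.
- by rewrite sum_sorted_re_eigs_laplacian ?(ltnW n_ge2) // arcs size_sorted_re_eigs.
Qed.

End AlgebraicConnectivity.

Section Star.
Variables (n : nat) (c : 'I_n).

Definition star : rel 'I_n := fun j i => (j == c) && (i != c).

Lemma simple_star : simple_digraph star.
Proof. by move=> i; rewrite /star; case: eqP => // ->; rewrite eqxx. Qed.

Lemma indeg_star i : indeg star i = (i != c).
Proof.
rewrite indegE; case: eqP => [-> | /eqP i_neq_c].
  by apply: eq_card0 => j; rewrite inE /star eqxx andbF.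
by apply/eqP/card1P; exists c => j; rewrite !inE /star i_neq_c andbT.
Qed.

Lemma directed_tree_star : directed_tree star.
Proof.
split.
  exists c => i; have [-> // | i_neq_c] := eqVneq i c.
  by apply: connect1; rewrite /star eqxx i_neq_c.
by rewrite num_arcsE (eq_bigr _ (fun i _ => indeg_star i)) sum_nat_predC1 card_ord.
Qed.

End Star.

Theorem theorem1 (n : nat) (hn : (2 <= n)%N) :
  (* the maximum of the algebraic connectivity over the class is 1 *)
  ((forall arc : rel 'I_n, simple_digraph arc -> num_arcs arc = n.-1 ->
      alg_connectivity arc <= 1) /\
   (exists arc : rel 'I_n, [/\ simple_digraph arc, num_arcs arc = n.-1 &
      alg_connectivity arc = 1])) /\
  (* characterization of the extremal graphs *)
  (forall arc : rel 'I_n, simple_digraph arc -> num_arcs arc = n.-1 ->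
      (alg_connectivity arc = 1 <-> directed_tree arc)).
Proof.
have n_gt0 : (0 < n)%N := ltnW hn.
split; [split | ].
- by move=> arc; apply: alg_connectivity_le1.
- have tree := directed_tree_star (Ordinal n_gt0).
  exists (star (Ordinal n_gt0)); split; [exact: simple_star | exact: tree.2 |].
  exact: alg_connectivity_directed_tree (simple_star _) tree.
- move=> arc arc_irr arcs; split; last exact: alg_connectivity_directed_tree.
  move=> a1; split=> //; case: (@rootedP _ arc) => // not_rooted.
  by move: a1; rewrite alg_connectivity_not_rooted // => /eqP; rewrite eq_sym oner_eq0.
Qed.
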